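(* Every regular triangulation of $[0,1]^L$ is induced by some generic fitness landscape $w:\{0,1\}^L\to\mathbb{R}_{\ge 0}$ that has exactly one peak.
   Context: Genotypes $g\in\{0,1\}^L$ are vertices of $[0,1]^L$. The triangulation induced by $w$ is the regular subdivision of $[0,1]^L$ obtained by projecting the upper faces of $\mathrm{conv}\{(g,w_g)\}\subset\mathbb{R}^{L+1}$; a triangulation is regular if induced in this way; $w$ is generic if all $w_g$ are distinct and the induced subdivision is a triangulation. A peak is a genotype all of whose Hamming neighbours have strictly lower fitness. *)

From HB Require Import structures.
From mathcomp Require Import all_boot all_order all_algebra.
From mathcomp Require Import reals.
Set Implicit Arguments. Unset Strict Implicit. Unset Printing Implicit Defensive.
Import Order.TTheory GRing.Theory Num.Theory.
Local Open Scope ring_scope.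

(* Genotypes g in {0,1}^L, i.e. vertices of the cube [0,1]^L. *)
Definition genotype (L : nat) := {ffun 'I_L -> bool}.

Definition coord (R : realType) (L : nat) (g : genotype L) (i : 'I_L) : R :=
  (g i : nat)%:R.

Definition aff (R : realType) (L : nat) (a : 'I_L -> R) (b : R) (g : genotype L) : R :=
  b + \sum_(i < L) a i * coord R g i.

(* S (a set of genotypes) is a cell of the regular subdivision induced by w:
   S is the set of vertices g whose lifted points (g, w g) lie on an upper face
   of conv{(g, w g)}, i.e. on which some affine function psi with psi >= w at
   all vertices attains equality (psi(g) = w g exactly for g in S). *)
Definition induced_cell (R : realType) (L : nat) (w : genotype L -> R)
    (S : {set genotype L}) : Prop :=
  exists (a : 'I_L -> R) (b : R),
    forall g : genotype L, w g <= aff a b g /\ (g \in S <-> w g = aff a b g).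

(* A subdivision of the vertex set is described by its collection of cells. *)
Definition induces (R : realType) (L : nat) (w : genotype L -> R)
    (T : {set genotype L} -> Prop) : Prop :=
  forall S, T S <-> induced_cell w S.

Definition affinely_independent (R : realType) (L : nat) (S : {set genotype L}) : Prop :=
  forall c : genotype L -> R,
    \sum_(g in S) c g = 0 ->
    (forall i : 'I_L, \sum_(g in S) c g * coord R g i = 0) ->
    forall g, g \in S -> c g = 0.

Definition is_triangulation (R : realType) (L : nat) (T : {set genotype L} -> Prop) : Prop :=
  forall S, T S -> affinely_independent R S.

Definition regular_triangulation (R : realType) (L : nat) (T : {set genotype L} -> Prop) : Prop :=
  exists w : genotype L -> R, induces w T /\ is_triangulation R T.

Definition generic (R : realType) (L : nat) (w : genotype L -> R) : Prop :=
  injective w /\ is_triangulation R (induced_cell w).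

Definition hamming_neighbour (L : nat) (g h : genotype L) : bool :=
  #|[set i : 'I_L | g i != h i]| == 1%N.

Definition is_peak (R : realType) (L : nat) (w : genotype L -> R) (g : genotype L) : Prop :=
  forall h, hamming_neighbour g h -> w h < w g.

From HB Require Import structures.
From mathcomp Require Import all_boot all_order all_algebra.
From mathcomp Require Import reals.
From mathcomp Require Import zify ring lra.

Set Implicit Arguments.
Unset Strict Implicit.
Unset Printing Implicit Defensive.
Import Order.TTheory GRing.Theory Num.Theory.
Local Open Scope ring_scope.

(* Adding an affine function to w does not change the induced subdivision, so
   we may tilt w by the affine function g |-> K + M * (binary value of g), with
   K bounding |w| and M > 2K.  The tilt dominates all differences of w, so the
   new landscape is nonnegative, injective, and orders the genotypes exactly as
   their binary values; in particular the all-ones genotype is its only peak. *)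

Lemma affD (R : realType) (L : nat) (a a' : 'I_L -> R) b b' (g : genotype L) :
  aff a b g + aff a' b' g = aff (fun i => a i + a' i) (b + b') g.
Proof.
rewrite /aff addrACA -big_split; congr (_ + _); apply: eq_bigr => i _.
by rewrite mulrDl.
Qed.

Lemma affN (R : realType) (L : nat) (a : 'I_L -> R) b (g : genotype L) :
  - aff a b g = aff (fun i => - a i) (- b) g.
Proof.
rewrite /aff opprD -sumrN; congr (_ + _); apply: eq_bigr => i _.
by rewrite mulNr.
Qed.

Lemma induced_cell_add_aff_imp (R : realType) (L : nat)
    (w w' : genotype L -> R) a b S :
  (forall g, w' g = w g + aff a b g) -> induced_cell w S -> induced_cell w' S.
Proof.
move=> w'E [a0 [b0 cellS]]; exists (fun i => a0 i + a i), (b0 + b) => g.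
rewrite w'E -affD lerD2r; have [w_le eq_S] := cellS g; split => //.
by rewrite eq_S; split=> [->|/addIr].
Qed.

Lemma induced_cell_add_aff (R : realType) (L : nat) (w : genotype L -> R)
    a b S :
  induced_cell (fun g => w g + aff a b g) S <-> induced_cell w S.
Proof.
split; last exact: induced_cell_add_aff_imp.
apply: (induced_cell_add_aff_imp (a := fun i => - a i) (b := - b)) => g.
by rewrite -affN addrK.
Qed.

Definition binval (L : nat) (g : genotype L) : nat :=
  (\sum_(i < L) g i * 2 ^ i)%N.

Lemma sum_bits_pow2_inj n (b c : 'I_n -> bool) :
  (\sum_(i < n) b i * 2 ^ i = \sum_(i < n) c i * 2 ^ i)%N -> b =1 c.
Proof.
elim: n b c => [|n IH] b c; first by move=> _ [].
have tail (d : 'I_n.+1 -> bool) :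
    (\sum_(i < n) d (lift ord0 i) * 2 ^ lift ord0 i
     = 2 * \sum_(i < n) d (lift ord0 i) * 2 ^ i)%N.
  by rewrite big_distrr; apply: eq_bigr => i _; rewrite lift0 expnS mulnCA.
rewrite !big_ord_recl !expn0 !muln1 !tail => E.
have E0 : b ord0 = c ord0.
  by move: E; case: (b ord0); case: (c ord0) => //= E; exfalso; lia.
have Etail j : b (lift ord0 j) = c (lift ord0 j).
  by apply: (IH (fun j => b (lift ord0 j)) (fun j => c (lift ord0 j)));
     move: E; rewrite E0; lia.
by move=> i; case: (unliftP ord0 i) => [j ->|->]; [exact: Etail|].
Qed.

Lemma binval_inj (L : nat) : injective (@binval L).
Proof. by move=> g h /sum_bits_pow2_inj E; apply/ffunP. Qed.

Lemma binval_lt (L : nat) (g h : genotype L) :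
  (forall i, g i ==> h i) -> g != h -> (binval g < binval h)%N.
Proof.
move=> le_gh neq_gh; rewrite ltn_neqAle (inj_eq (@binval_inj L)) neq_gh.
by apply: leq_sum => i _; move: (le_gh i); case: (g i); case: (h i).
Qed.

Lemma hamming_neighbour_neq (L : nat) (g h : genotype L) :
  hamming_neighbour g h -> g != h.
Proof.
apply: contraL => /eqP <-; rewrite /hamming_neighbour.
suff -> : [set i | g i != g i] = set0 by rewrite cards0.
by apply/setP => i; rewrite !inE eqxx.
Qed.

Lemma hamming_neighbour_flip (L : nat) (g : genotype L) j :
  ~~ g j -> hamming_neighbour g [ffun i => (i == j) || g i].
Proof.
move=> gj; rewrite /hamming_neighbour.
suff -> : [set i | g i != [ffun i => (i == j) || g i] i] = [set j].
  by rewrite cards1.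
apply/setP => i; rewrite !inE ffunE; case: (eqVneq i j) => [->|_] /=.
  by rewrite (negbTE gj).
by rewrite eqxx.
Qed.

Lemma binval_monotone_unique_peak (R : realType) (L : nat)
    (f : genotype L -> R) :
  (forall g h, (binval g < binval h)%N -> f g < f h) ->
  is_peak f [ffun=> true] /\ forall g, is_peak f g -> g = [ffun=> true].
Proof.
move=> f_mono; split.
  move=> h /hamming_neighbour_neq neq; apply: f_mono; apply: binval_lt.
    by move=> i; rewrite ffunE implybT.
  by rewrite eq_sym.
move=> g g_peak; apply/ffunP => j; rewrite ffunE; apply/negPn/negP => gj.
have lt_flip : f g < f [ffun i => (i == j) || g i].
  apply: f_mono; apply: binval_lt => [i|].
    by rewrite ffunE implybE orbCA orNb orbT.
  by apply/eqP => /ffunP/(_ j); rewrite ffunE eqxx (negbTE gj).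
by have := g_peak _ (hamming_neighbour_flip gj); rewrite ltNge (ltW lt_flip).
Qed.

Section Tilt.

Variables (R : realType) (L : nat) (w : genotype L -> R).

Let K : R := \sum_(g : genotype L) `|w g|.
Let M : R := 2 * K + 1.

Definition tilt (g : genotype L) : R := w g + aff (fun i => M * 2 ^+ i) K g.

Lemma norm_le_sum g : `|w g| <= K.
Proof. by rewrite /K (bigD1 g) //= lerDl sumr_ge0. Qed.

Lemma tiltE g : tilt g = w g + K + M * (binval g)%:R.
Proof.
rewrite /tilt /aff addrA /binval natr_sum mulr_sumr; congr (_ + _).
apply: eq_bigr => i _; rewrite /coord natrM natrX; ring.
Qed.

Lemma tilt_ge0 g : 0 <= tilt g.
Proof.
have := norm_le_sum g; rewrite tiltE ler_norml => /andP [lo _].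
have K0 : 0 <= K by rewrite sumr_ge0.
by apply: addr_ge0; [lra | apply: mulr_ge0; [rewrite /M; lra | exact: ler0n]].
Qed.

Lemma tilt_lt g h : (binval g < binval h)%N -> tilt g < tilt h.
Proof.
move=> lt_gh; rewrite !tiltE.
have lt1 : (binval g)%:R + 1 <= (binval h)%:R :> R by rewrite natr1 ler_nat.
have := norm_le_sum g; have := norm_le_sum h.
rewrite !ler_norml /M => /andP [h1 h2] /andP [g1 g2]; nra.
Qed.

Lemma tilt_inj : injective tilt.
Proof.
move=> g h E; apply: binval_inj.
by case: (ltngtP (binval g) (binval h)) => // /tilt_lt; rewrite E ltxx.
Qed.

Lemma induced_cell_tilt S : induced_cell tilt S <-> induced_cell w S.
Proof. exact: induced_cell_add_aff. Qed.

End Tilt.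

Theorem corollary1 (R : realType) (L : nat) (T : {set genotype L} -> Prop) :
  regular_triangulation R T ->
  exists w : genotype L -> R,
    [/\ generic w, (forall g, 0 <= w g), induces w T
      & exists g, is_peak w g /\ forall h, is_peak w h -> h = g].
Proof.
move=> [w [w_induces T_tri]]; exists (tilt w); split.
- split; first exact: tilt_inj.
  by move=> S /induced_cell_tilt /w_induces /T_tri.
- exact: tilt_ge0.
- by move=> S; rewrite w_induces induced_cell_tilt.
- by exists [ffun=> true]; apply: binval_monotone_unique_peak; exact: tilt_lt.
Qed.
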